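(* Let $R$ be a $d\times d$ expansive integer matrix, $B\subset\mathbb{Z}^d$ finite with $0\in B$, $N:=|B|$, $L\subset\mathbb{Z}^d$ finite with $0\in L$, and $(\alpha_l)_{l\in L}$ complex numbers. The following are equivalent: (i) the matrix $T=\frac{1}{\sqrt N}\left(e^{2\pi i (R^T)^{-1}l\cdot b}\alpha_l\right)_{l\in L,b\in B}$ has orthonormal columns; (ii) for every $t\in\mathbb{R}^d$, $\sum_{l\in L}|\alpha_l|^2\left|m_B((R^T)^{-1}(t-l))\right|^2=1$; (iii) the functions $\{\alpha_le_l: l\in L\}$ form a Parseval frame for $L^2(\delta_{R^{-1}B})$, where $\delta_{R^{-1}B}=\frac1N\sum_{b\in B}\delta_{R^{-1}b}$.
   Context: $e_\lambda(x)=e^{2\pi i\lambda\cdot x}$, $m_B(x)=\frac1N\sum_{b\in B}e^{2\pi ib\cdot x}$, $\delta_a$ is the Dirac measure at $a$. A family $\{f_i\}$ in a Hilbert space $H$ is a Parseval frame if $\sum_i|\langle v,f_i\rangle|^2=\|v\|^2$ for all $v\in H$. A matrix is expansive if all eigenvalues have modulus $>1$. *)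

From HB Require Import structures.
From mathcomp Require Import all_boot all_order all_algebra.
From mathcomp Require Import all_classical all_reals all_analysis.
From mathcomp Require Import complex.
Set Implicit Arguments. Unset Strict Implicit. Unset Printing Implicit Defensive.
Import Order.TTheory GRing.Theory Num.Theory.
Local Open Scope ring_scope.
Local Open Scope complex_scope.

Section Defs.
Variable R : realType.
Variable d : nat.

Definition intv (v : 'rV[int]_d) : 'rV[R]_d := map_mx (fun z : int => z%:~R) v.
Definition intm (A : 'M[int]_d) : 'M[R]_d := map_mx (fun z : int => z%:~R) A.

Definition dotR (x y : 'rV[R]_d) : R := \sum_(i < d) x 0 i * y 0 i.

Definition e2pi (x : R) : R[i] := (cos (2 * pi * x)) +i* (sin (2 * pi * x)).

Definition e_ (lam x : 'rV[R]_d) : R[i] := e2pi (dotR lam x).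

Definition expansive (A : 'M[int]_d) : Prop :=
  forall z : R[i], root (char_poly (map_mx (fun k : int => k%:~R) A)) z ->
    1 < `|z|.

Definition mB (B : seq 'rV[int]_d) (x : 'rV[R]_d) : R[i] :=
  (size B)%:R^-1 * \sum_(b <- B) e_ (intv b) x.

(* the matrix T = 1/sqrt N ( e^{2 pi i (R^T)^{-1} l . b} alpha_l )_{l in L, b in B};
   rows indexed by the enumeration of L, columns by that of B.
   As row vectors, (R^T)^{-1} l  is  l *m R^{-1}. *)
Definition Tmat (A : 'M[int]_d) (B L : seq 'rV[int]_d)
  (alpha : 'rV[int]_d -> R[i]) : 'M[R[i]]_(size L, size B) :=
  \matrix_(i < size L, j < size B)
    ((Num.sqrt ((size B)%:R : R))^-1%:C
      * e_ (intv (nth 0 L i) *m invmx (intm A)) (intv (nth 0 B j))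
      * alpha (nth 0 L i)).

Definition orthonormal_columns m n (T : 'M[R[i]]_(m, n)) : Prop :=
  (map_mx (fun z : R[i] => z^*) T)^T *m T = 1%:M.

(* inner product of L^2(delta_{R^{-1}B}),
   delta_{R^{-1}B} = 1/N sum_{b in B} delta_{R^{-1} b};
   as row vectors, R^{-1} b is  b *m (R^{-1})^T. *)
Definition ip_dB (A : 'M[int]_d) (B : seq 'rV[int]_d)
  (v w : 'rV[R]_d -> R[i]) : R[i] :=
  (size B)%:R^-1 *
    \sum_(b <- B) v (intv b *m (invmx (intm A))^T)
                  * (w (intv b *m (invmx (intm A))^T))^*.

Definition parseval_frame_dB (A : 'M[int]_d) (B L : seq 'rV[int]_d)
  (alpha : 'rV[int]_d -> R[i]) : Prop :=
  forall v : 'rV[R]_d -> R[i],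
    \sum_(l <- L) `|ip_dB A B v (fun x => alpha l * e_ (intv l) x)| ^+ 2
    = ip_dB A B v v.

End Defs.

(* All three conditions are equivalent to the Gram identity G = N I, where
   G_jk = sum_l |alpha_l|^2 e((R^T)^{-1} l . (b_k - b_j)).  For (i), T^* T = G / N.
   For (iii), the frame sum and ||v||^2 are the hermitian forms of G / N^2 and
   I / N evaluated at the values of v on the atoms R^{-1} b_j, so polarization
   applies.  For (ii), the left-hand side equals
   N^{-2} sum_jk G_jk e(R^{-1}(b_j - b_k) . t); since exponentials with distinct
   frequencies are linearly independent and G_jk only depends on b_j - b_k,
   this is constantly 1 exactly when G = N I. *)

From HB Require Import structures.
From mathcomp Require Import all_boot all_order all_algebra.
From mathcomp Require Import all_classical all_reals all_analysis.
From mathcomp Require Import complex.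
From mathcomp Require Import ring.
Set Implicit Arguments. Unset Strict Implicit. Unset Printing Implicit Defensive.
Import Order.TTheory GRing.Theory Num.Theory.
Local Open Scope ring_scope.
Local Open Scope complex_scope.

Section Character.
Variable R : realType.

Lemma e2piD (a b : R) : e2pi (a + b) = e2pi a * e2pi b.
Proof. by rewrite /e2pi mulrDr cosD sinD /=; congr (_ +i* _); ring. Qed.

Lemma e2pi0 : e2pi 0 = 1 :> R[i].
Proof. by rewrite /e2pi mulr0 cos0 sin0. Qed.

Lemma conj_e2pi (a : R) : (e2pi a)^*%R = e2pi (- a).
Proof. by rewrite /e2pi /= mulrN cosN sinN. Qed.

Lemma e2pi_half : e2pi 2^-1 = -1 :> R[i].
Proof.
rewrite /e2pi mulrAC divff ?pnatr_eq0 // mul1r cospi sinpi.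
by apply/eqP; rewrite eq_complex /= oppr0 !eqxx.
Qed.

Lemma e2pi_neq0 (a : R) : e2pi a != 0.
Proof.
apply/eqP => a0; have := e2piD a (- a).
by rewrite subrr e2pi0 a0 mul0r => /eqP; rewrite oner_eq0.
Qed.

End Character.

Section DotProduct.
Variables (R : realType) (d : nat).
Implicit Types x y z : 'rV[R]_d.

Lemma dotRE x y : dotR x y = (x *m y^T) 0 0.
Proof. by rewrite /dotR !mxE; apply: eq_bigr => i _; rewrite !mxE. Qed.

Lemma dotRC x y : dotR x y = dotR y x.
Proof. by apply: eq_bigr => i _; rewrite mulrC. Qed.

Lemma dotRDr x y z : dotR x (y + z) = dotR x y + dotR x z.
Proof. by rewrite !dotRE linearD mulmxDr mxE. Qed.

Lemma dotR0r x : dotR x 0 = 0.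
Proof. by rewrite dotRE trmx0 mulmx0 mxE. Qed.

Lemma dotRBr x y z : dotR x (y - z) = dotR x y - dotR x z.
Proof. by rewrite !dotRE linearB /= mulmxBr !mxE. Qed.

Lemma dotRBl x y z : dotR (x - y) z = dotR x z - dotR y z.
Proof. by rewrite dotRC dotRBr !(dotRC z). Qed.

Lemma dotRNr x y : dotR x (- y) = - dotR x y.
Proof. by rewrite -sub0r dotRBr dotR0r sub0r. Qed.

Lemma dotRZl a x y : dotR (a *: x) y = a * dotR x y.
Proof. by rewrite !dotRE -scalemxAl mxE. Qed.

Lemma dotR_mulmx x y (M : 'M[R]_d) : dotR x (y *m M) = dotR (x *m M^T) y.
Proof. by rewrite !dotRE trmx_mul mulmxA. Qed.

Lemma dotR_eq0 x : (dotR x x == 0) = (x == 0).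
Proof.
apply/idP/eqP => [|->]; last by rewrite dotR0r.
rewrite psumr_eq0 => [/allP x0|i _]; last by rewrite -expr2 sqr_ge0.
apply/rowP => i; rewrite mxE; apply/eqP.
by rewrite -sqrf_eq0 expr2; exact: x0 (mem_index_enum i).
Qed.

Lemma exists_dotR_half x : x != 0 -> exists h, dotR x h = 2^-1.
Proof.
rewrite -dotR_eq0 => xx; exists ((2 * dotR x x)^-1 *: x).
by rewrite dotRC dotRZl invfM -mulrA mulVf ?mulr1.
Qed.

End DotProduct.

Section ExponentialSums.
Variables (R : realType) (d : nat) (I : finType).
Implicit Types (P : {set I}) (c : I -> R[i]) (w : I -> 'rV[R]_d).

Lemma exp_sum_shift P c w v h :
  (forall t, \sum_(i in P) c i * e2pi (dotR (w i) t) = 0) ->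
  forall t, \sum_(i in P :\: [set i | w i == v])
    c i * (e2pi (dotR (w i) h) - e2pi (dotR v h)) * e2pi (dotR (w i) t) = 0.
Proof.
move=> sum0 t.
have E : \sum_(i in P)
    c i * (e2pi (dotR (w i) h) - e2pi (dotR v h)) * e2pi (dotR (w i) t) = 0.
  transitivity (\sum_(i in P) c i * e2pi (dotR (w i) (h + t))
      - e2pi (dotR v h) * \sum_(i in P) c i * e2pi (dotR (w i) t)).
    by rewrite mulr_sumr -sumrB; apply: eq_bigr => i _; rewrite dotRDr e2piD; ring.
  by rewrite !sum0 mulr0 subrr.
rewrite (big_setID [set i | w i == v]) /= big1 ?add0r in E => [//|i].
by rewrite !inE => /andP[_ /eqP ->]; rewrite subrr mulr0 mul0r.
Qed.

(* Induction on #|P|: shifting t by an h with (w i0 - w i1) . h = 1/2 and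
   subtracting e(w i1 . h) times the original sum removes the fiber of w i1
   and multiplies the fiber of w i0 by -2 e(w i1 . h). *)
Lemma exp_sum_eq0_fiber P c w :
  (forall t, \sum_(i in P) c i * e2pi (dotR (w i) t) = 0) ->
  forall i0, i0 \in P -> \sum_(i in P | w i == w i0) c i = 0.
Proof.
have [n cardP] := ubnP #|P|.
elim: n P c cardP => // n IH P c cardP sum0 i0 Pi0.
have [i1 /andP[Pi1 w10] | fiber_all] := pickP [pred i in P | w i != w i0]; last first.
  rewrite -[RHS](sum0 0); apply: eq_big => [i|i _]; last by rewrite dotR0r e2pi0 mulr1.
  by have := fiber_all i; rewrite /=; case: (i \in P) => //= /negbFE ->.
have [h u_h] : exists h, dotR (w i0 - w i1) h = 2^-1.
  by apply: exists_dotR_half; rewrite subr_eq0 eq_sym.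
pose P' := P :\: [set i | w i == w i1].
pose c' i := c i * (e2pi (dotR (w i) h) - e2pi (dotR (w i1) h)).
have cardP' : (#|P'| < n)%N.
  rewrite -ltnS; apply: leq_trans cardP; apply/proper_card/properP.
  by split; [exact: subsetDl | exists i1; rewrite // !inE eqxx].
have P'i0 : i0 \in P' by rewrite !inE Pi0 andbT eq_sym.
have := IH P' c' cardP' (exp_sum_shift (w i1) h sum0) i0 P'i0.
have -> : \sum_(i in P' | w i == w i0) c' i
    = (e2pi (dotR (w i0) h) - e2pi (dotR (w i1) h)) * \sum_(i in P | w i == w i0) c i.
  rewrite mulr_sumr; apply: eq_big => [i|i /andP[_ /eqP w_i]]; last first.
    by rewrite /c' w_i mulrC.
  by rewrite !inE; case: (w i =P w i0) => [->|]; rewrite ?andbF ?andbT // eq_sym w10.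
move/eqP; rewrite mulf_eq0 => /orP[|/eqP //].
rewrite -[w i0](subrK (w i1)) dotRC dotRDr dotRC u_h (dotRC _ h) e2piD e2pi_half.
by rewrite mulN1r -opprD oppr_eq0 -mulr2n mulrn_eq0 (negbTE (e2pi_neq0 _)).
Qed.

Lemma exp_sum_eq0_coef c w :
  (forall t, \sum_i c i * e2pi (dotR (w i) t) = 0) ->
  (forall i j, w i = w j -> c i = c j) -> forall i, c i = 0.
Proof.
move=> sum0 c_w i.
have sumT t : \sum_(j in [set: I]) c j * e2pi (dotR (w j) t) = 0.
  by rewrite -[RHS](sum0 t); apply: eq_bigl => j; rewrite inE.
have := exp_sum_eq0_fiber sumT (finset.in_setT i).
rewrite (eq_bigr (fun=> c i)) => [|j /andP[_ /eqP /c_w //]].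
rewrite sumr_const => /eqP; rewrite mulrn_eq0 => /orP[|/eqP //].
by move/eqP/card0_eq/(_ i); rewrite unfold_in /= finset.in_setT eqxx.
Qed.

End ExponentialSums.

Section DeltaSums.
Variables (S : pzSemiRingType) (n : nat).

Lemma sum_delta (F : 'I_n -> S) a : \sum_k (k == a)%:R * F k = F a.
Proof.
rewrite (bigD1 a) //= eqxx mul1r big1 ?addr0 // => k /negbTE ->.
by rewrite mul0r.
Qed.

Lemma sum_delta2 (F : 'I_n -> S) a b z :
  \sum_k ((k == a)%:R + z * (k == b)%:R) * F k = F a + z * F b.
Proof.
rewrite -sum_delta -(sum_delta _ b) mulr_sumr -big_split /=.
by apply: eq_bigr => k _; rewrite mulrDl mulrA.
Qed.

End DeltaSums.

Section Polarization.
Variables (C : numClosedFieldType) (n : nat).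
Implicit Types (H : 'M[C]_n) (u : 'I_n -> C).

Definition qform H u := \sum_j \sum_k u j * (u k)^* * H j k.

Lemma qformB H1 H2 u : qform (H1 - H2) u = qform H1 u - qform H2 u.
Proof.
rewrite /qform -sumrB; apply: eq_bigr => j _.
by rewrite -sumrB; apply: eq_bigr => k _; rewrite !mxE mulrBr.
Qed.

Lemma qform_scalar a u : qform a%:M u = a * \sum_j u j * (u j)^*.
Proof.
rewrite mulr_sumr; apply: eq_bigr => j _.
rewrite (eq_bigr (fun k => (k == j)%:R * (u j * (u k)^* * a))) ?sum_delta.
  by rewrite mulrC mulrA.
by move=> k _; rewrite mxE -mulr_natl eq_sym; ring.
Qed.

Lemma qform_delta2 H a b z :
  qform H (fun j => (j == a)%:R + z * (j == b)%:R)
  = H a a + z^* * H a b + z * H b a + z * z^* * H b b.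
Proof.
transitivity (\sum_j ((j == a)%:R + z * (j == b)%:R) * (H j a + z^* * H j b)).
  apply: eq_bigr => j _; rewrite -(sum_delta2 (fun k => H j k)) mulr_sumr.
  by apply: eq_bigr => k _; rewrite rmorphD rmorphM /= !conjC_nat; ring.
by rewrite (sum_delta2 (fun j => H j a + z^* * H j b)); ring.
Qed.

Lemma qform_eq0 H : (forall u, qform H u = 0) -> H = 0.
Proof.
move=> qH0; apply/matrixP => a b; rewrite mxE.
have Q a' b' z : H a' a' + z^* * H a' b' + z * H b' a' + z * z^* * H b' b' = 0.
  by rewrite -qform_delta2.
have Hd c : H c c = 0 by have := Q c c 0; rewrite conjC0 !mul0r !addr0.
have E1 := Q a b 1; rewrite conjC1 !mul1r (Hd a) (Hd b) add0r addr0 in E1.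
have E2 := Q a b 'i%R; rewrite conjCi (Hd a) (Hd b) add0r mulr0 addr0 in E2.
have : 2 * 'i * H a b = 'i * (H a b + H b a) - (- 'i * H a b + 'i * H b a) :> C by ring.
rewrite E1 E2 mulr0 subrr => /eqP.
by rewrite !mulf_eq0 pnatr_eq0 (negbTE (neq0Ci C)) => /eqP.
Qed.

End Polarization.

Lemma expansive_unitmx (R : realType) d (A : 'M[int]_d) :
  expansive R A -> intm R A \in unitmx.
Proof.
move=> expA; have : ~~ root (char_poly (map_mx (intmul (1 : R[i])) A)) 0.
  by apply/negP => /expA; rewrite normr0 ltr10.
rewrite /root horner_coef0 char_poly_det mulf_eq0 negb_or => /andP[_].
rewrite (det_map_mx (intmul 1)) intr_eq0 => detA.
by rewrite unitmxE /intm (det_map_mx (intmul 1)) unitfE intr_eq0.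
Qed.

Lemma intv_inj (R : realType) d : injective (@intv R d).
Proof.
move=> x y /matrixP xy; apply/matrixP => i j.
by have /eqP := xy i j; rewrite !mxE eqr_int => /eqP.
Qed.

Lemma conjcE (R : realType) (x : R[i]) : x^*%C = x^*%R.
Proof. by []. Qed.

Section Main.
Variables (R : realType) (d : nat) (A : 'M[int]_d).
Variables (B L : seq 'rV[int]_d) (alpha : 'rV[int]_d -> R[i]).
Hypotheses (A_unit : intm R A \in unitmx) (B_uniq : uniq B) (B0 : 0 \in B).

Local Notation N := (size B).
Local Notation M := (invmx (intm R A)).
(* For row vectors, [l *m M] is (R^T)^{-1} l and [b *m M^T] is R^{-1} b. *)
Let beta (j : 'I_N) := intv R (nth 0 B j).
Let lam l := intv R l *m M.

Definition gram : 'M[R[i]]_N := \matrix_(j, k)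
  \sum_(l <- L) `|alpha l| ^+ 2 * e2pi (dotR (lam l) (beta k - beta j)).

Lemma N_neq0 : (N%:R : R[i]) != 0.
Proof. by rewrite pnatr_eq0 -lt0n; case: B B0. Qed.

Lemma beta_inj : injective beta.
Proof. by move=> j k /intv_inj/eqP; rewrite nth_uniq // => /eqP/val_inj. Qed.

Lemma Tmat_gram :
  (map_mx (fun z : R[i] => z^*) (Tmat A B L alpha))^T *m Tmat A B L alpha
  = N%:R^-1 *: gram.
Proof.
have s2 : (Num.sqrt (N%:R : R))^-1%:C ^+ 2 = N%:R^-1 :> R[i].
  by rewrite -rmorphXn /= exprVn sqr_sqrtr ?ler0n // fmorphV rmorph_nat.
apply/matrixP => j k; rewrite !mxE (big_nth 0) big_mkord mulr_sumr.
apply: eq_bigr => i _; rewrite !mxE /e_ conjcE !rmorphM [in X in X * _]/= conj_e2pi.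
rewrite -conjcE conjc_real normCK /lam /beta dotRBr e2piD.
by rewrite -s2; ring.
Qed.

Lemma orthonormal_columns_Tmat :
  orthonormal_columns (Tmat A B L alpha) <-> gram = N%:R%:M.
Proof.
rewrite /orthonormal_columns Tmat_gram; split=> [/(congr1 ( *:%R N%:R)) | ->].
  by rewrite scalerA mulfV ?N_neq0 // scale1r scalemx1.
by rewrite scale_scalar_mx mulVf ?N_neq0.
Qed.

Let freq j k := (beta j - beta k) *m M^T.

Lemma sqr_norm_mB x :
  `|mB B x| ^+ 2 = (N%:R ^+ 2)^-1 * \sum_j \sum_k e2pi (dotR (beta j - beta k) x).
Proof.
rewrite normCK /mB (big_nth 0) big_mkord rmorphM rmorph_sum fmorphV [in X in _ * X]/=.
rewrite conjC_nat mulrACA -exprVn expr2; congr (_ * _).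
rewrite mulr_suml; apply: eq_bigr => j _; rewrite mulr_sumr; apply: eq_bigr => k _.
by rewrite /e_ conj_e2pi -e2piD dotRBl.
Qed.

Lemma dotR_shift j k l t :
  dotR (beta j - beta k) ((t - intv R l) *m M)
  = dotR (freq j k) t + dotR (lam l) (beta k - beta j).
Proof.
rewrite [LHS]dotR_mulmx [LHS]dotRBr; congr (_ + _).
by rewrite -dotR_mulmx dotRC -dotRNr opprB.
Qed.

Lemma mB_sum_expansion t :
  \sum_(l <- L) `|alpha l| ^+ 2 * `|mB B ((t - intv R l) *m M)| ^+ 2
  = (N%:R ^+ 2)^-1 * \sum_j \sum_k gram j k * e2pi (dotR (freq j k) t).
Proof.
transitivity (\sum_(l <- L) (N%:R ^+ 2)^-1 * \sum_j \sum_k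
    `|alpha l| ^+ 2 * e2pi (dotR (freq j k) t + dotR (lam l) (beta k - beta j))).
  apply: eq_bigr => l _; rewrite sqr_norm_mB mulrCA mulr_sumr; congr (_ * _).
  apply: eq_bigr => j _; rewrite mulr_sumr; apply: eq_bigr => k _.
  by rewrite dotR_shift.
rewrite -mulr_sumr exchange_big; congr (_ * _); apply: eq_bigr => j _.
rewrite exchange_big; apply: eq_bigr => k _; rewrite mxE mulr_suml.
by apply: eq_bigr => l _; rewrite e2piD; ring.
Qed.

Lemma sum_scalar_mx_exp a t :
  \sum_j \sum_k (a%:M : 'M[R[i]]_N) j k * e2pi (dotR (freq j k) t) = a * N%:R.
Proof.
transitivity (\sum_(j < N) a); last by rewrite sumr_const card_ord mulr_natr.
apply: eq_bigr => j _; rewrite -[RHS](sum_delta (fun=> a) j); apply: eq_bigr => k _.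
rewrite mxE eq_sym; case: eqP => [->|_]; last by rewrite !mul0r.
by rewrite /freq subrr mul0mx dotRC dotR0r e2pi0 mulr1 mul1r.
Qed.

Lemma gram_sub_scalar_const_freq j k j' k' : freq j k = freq j' k' ->
  (gram - N%:R%:M) j k = (gram - N%:R%:M) j' k'.
Proof.
move=> /(congr1 (mulmx^~ (invmx M^T))); rewrite !mulmxK ?unitmx_tr ?unitmx_inv // => E.
rewrite !mxE -(opprB (beta j)) -(opprB (beta j')) E; congr (_ - _ *+ _).
by rewrite -(inj_eq beta_inj) -subr_eq0 E subr_eq0 (inj_eq beta_inj).
Qed.

Lemma mB_identity_iff :
  (forall t, \sum_(l <- L) `|alpha l| ^+ 2 * `|mB B ((t - intv R l) *m M)| ^+ 2 = 1)
  <-> gram = N%:R%:M.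
Proof.
have N2_neq0 : (N%:R ^+ 2 : R[i]) != 0 by rewrite expf_neq0 ?N_neq0.
split=> [mB_one | gram_scalar t]; last first.
  by rewrite mB_sum_expansion gram_scalar sum_scalar_mx_exp -expr2 mulVf.
apply/eqP; rewrite -subr_eq0; apply/eqP/matrixP => j k; rewrite [RHS]mxE.
pose c (p : 'I_N * 'I_N) := (gram - N%:R%:M) p.1 p.2.
have sum0 t : \sum_p c p * e2pi (dotR (freq p.1 p.2) t) = 0.
  rewrite -(pair_bigA _ (fun j k => c (j, k) * e2pi (dotR (freq j k) t))) /=.
  transitivity (\sum_j \sum_k gram j k * e2pi (dotR (freq j k) t)
      - \sum_j \sum_k (N%:R%:M : 'M[R[i]]_N) j k * e2pi (dotR (freq j k) t)).
    rewrite -sumrB; apply: eq_bigr => j' _; rewrite -sumrB; apply: eq_bigr => k' _.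
    by rewrite /c -mulrBl !mxE.
  apply/eqP; rewrite subr_eq0 sum_scalar_mx_exp -expr2; apply/eqP.
  by apply: (mulfI (invr_neq0 N2_neq0)); rewrite -mB_sum_expansion mB_one mulVf.
exact: (exp_sum_eq0_coef sum0 (fun p q => @gram_sub_scalar_const_freq _ _ _ _) (j, k)).
Qed.

Let atom j := beta j *m M^T.

Lemma atom_inj : injective atom.
Proof.
move=> j k /(congr1 (mulmx^~ (invmx M^T))).
by rewrite !mulmxK ?unitmx_tr ?unitmx_inv // => /beta_inj.
Qed.

Lemma frame_sum_qform v :
  \sum_(l <- L) `|ip_dB A B v (fun y => alpha l * e_ (intv R l) y)| ^+ 2
  = (N%:R ^+ 2)^-1 * qform gram (v \o atom).
Proof.
have ipE l : ip_dB A B v (fun y => alpha l * e_ (intv R l) y)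
    = N%:R^-1 * \sum_j v (atom j) * ((alpha l)^* * e2pi (- dotR (lam l) (beta j))).
  rewrite /ip_dB (big_nth 0) big_mkord; congr (_ * _); apply: eq_bigr => j _.
  rewrite /e_ rmorphM [in X in _ * X]/= conj_e2pi dotR_mulmx trmxK.
  by rewrite -/(atom j) -/(beta j) -/(lam _).
transitivity (\sum_(l <- L) (N%:R ^+ 2)^-1 * \sum_j \sum_k v (atom j) * (v (atom k))^*
    * (`|alpha l| ^+ 2 * e2pi (dotR (lam l) (beta k - beta j)))).
  apply: eq_bigr => l _; rewrite ipE normCK rmorphM rmorph_sum fmorphV [in X in _ * X]/=.
  rewrite conjC_nat mulrACA -exprVn expr2; congr (_ * _).
  rewrite mulr_suml; apply: eq_bigr => j _; rewrite mulr_sumr; apply: eq_bigr => k _.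
  rewrite !rmorphM [in X in _ * X]/= conjCK conj_e2pi opprK normCK dotRBr e2piD.
  by ring.
rewrite -mulr_sumr; congr (_ * _); rewrite exchange_big; apply: eq_bigr => j _.
rewrite exchange_big; apply: eq_bigr => k _; rewrite mxE mulr_sumr.
by apply: eq_bigr => l _.
Qed.

Lemma ip_dB_qform v : ip_dB A B v v = (N%:R ^+ 2)^-1 * qform N%:R%:M (v \o atom).
Proof.
rewrite qform_scalar expr2 invfM -mulrA (mulrA N%:R^-1 N%:R) mulVf ?N_neq0 // mul1r.
by rewrite /ip_dB (big_nth 0) big_mkord.
Qed.

Lemma parseval_frame_dB_iff : parseval_frame_dB A B L alpha <-> gram = N%:R%:M.
Proof.
split=> [frame | gram_scalar v]; last by rewrite frame_sum_qform ip_dB_qform gram_scalar.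
apply/eqP; rewrite -subr_eq0; apply/eqP/qform_eq0 => u.
pose v y := \sum_m (y == atom m)%:R * u m.
have v_atom : v \o atom = u.
  apply/funext => j /=; rewrite -[RHS](sum_delta u j); apply: eq_bigr => m _.
  by rewrite (inj_eq atom_inj) eq_sym.
have := frame v; rewrite frame_sum_qform ip_dB_qform v_atom.
by move/(mulfI (invr_neq0 (expf_neq0 2 N_neq0))); rewrite qformB => ->; rewrite subrr.
Qed.

End Main.

Theorem proposition3p5 (R : realType) (d : nat) (A : 'M[int]_d)
  (B L : seq 'rV[int]_d) (alpha : 'rV[int]_d -> R[i]) :
  expansive R A ->
  uniq B -> 0 \in B ->
  uniq L -> 0 \in L ->
  [/\ (orthonormal_columns (Tmat A B L alpha) <->
        (forall t : 'rV[R]_d,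
           \sum_(l <- L) `|alpha l| ^+ 2
              * `|mB B ((t - intv R l) *m invmx (intm R A))| ^+ 2 = 1)),
      ((forall t : 'rV[R]_d,
           \sum_(l <- L) `|alpha l| ^+ 2
              * `|mB B ((t - intv R l) *m invmx (intm R A))| ^+ 2 = 1) <->
        parseval_frame_dB A B L alpha) &
      (parseval_frame_dB A B L alpha <-> orthonormal_columns (Tmat A B L alpha))].
Proof.
(* Expansiveness is only used through invertibility. *)
move=> /expansive_unitmx A_unit B_uniq B0 _ _.
have T_gram := orthonormal_columns_Tmat A L alpha B0.
have mB_gram := mB_identity_iff L alpha A_unit B_uniq B0.
have frame_gram := parseval_frame_dB_iff L alpha A_unit B_uniq B0.
split.
- exact: iff_trans T_gram (iff_sym mB_gram).
- exact: iff_trans mB_gram (iff_sym frame_gram).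
- exact: iff_trans frame_gram (iff_sym T_gram).
Qed.
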